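(* Every finitely satisfiable $\mathsf{BST}^{\otimes}$-conjunction is fulfilled by an accessible $\otimes$-graph that admits a topological $\otimes$-order.
   Context: Sets range over the von Neumann universe of well-founded sets. For sets $s,t$, $s\otimes t=\{\{u,v\} : u\in s,\ v\in t\}$. A $\mathsf{BST}^{\otimes}$-conjunction is a finite conjunction of literals of the forms $x=y\cup z$, $x=y\setminus z$, $x=y\otimes z$, $x\neq y$ ($x,y,z$ set variables); it is finitely satisfiable if it is satisfied by some set assignment $M$ on its variables (variables interpreted as the sets $Mv$, operators with usual meaning) with $\bigcup_v Mv$ finite. A $\otimes$-graph $\mathcal G=(\mathcal P,\mathcal N,\mathcal T)$ consists of a set $\mathcal P$ of places, the set of nodes $\mathcal N=\mathcal P\otimes\mathcal P$ (the nonempty subsets of $\mathcal P$ with at most two elements), $\mathcal P\cap\mathcal N=\emptyset$, and a target map $\mathcal T:\mathcal N\to\mathcal P(\mathcal P)$. A source place is a place belonging to no $\mathcal T(A)$; a node $A$ is a $\otimes$-node if $\mathcal T(A)\neq\emptyset$. The accessible places form the smallest set of places containing all source places and containing $\mathcal T(A)$ whenever all places of $A$ belong to it; $\mathcal G$ is accessible if every place is accessible. A topological $\otimes$-order of $\mathcal G$ is a total order $\prec$ on $\mathcal P$ with $\max_\prec A\prec\max_\prec\mathcal T(A)$ for every $\otimes$-node $A$. A map $\mathfrak F:\mathrm{Vars}(\Phi)\to\mathcal P(\mathcal P)$ is $\mathcal G$-fulfilling for $\Phi$ if: (a) $\mathfrak F(x)=\mathfrak F(y)\star\mathfrak F(z)$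 for each conjunct $x=y\star z$, $\star\in\{\cup,\setminus\}$; (b) $\mathfrak F(x)\neq\mathfrak F(y)$ for each conjunct $x\neq y$; (c) for each conjunct $x=y\otimes z$: (c1) $\emptyset\neq\mathcal T(\{\upsilon,\zeta\})\subseteq\mathfrak F(x)$ for all $\upsilon\in\mathfrak F(y),\zeta\in\mathfrak F(z)$; (c2) $\mathfrak F(x)\subseteq\bigcup\{\mathcal T(A):A\in\mathfrak F(y)\otimes\mathfrak F(z)\}$; (c3) $\bigcup\{\mathcal T(A):A\in\mathcal N\setminus(\mathfrak F(y)\otimes\mathfrak F(z))\}\cap\mathfrak F(x)=\emptyset$. $\mathcal G$ fulfills $\Phi$ if such a map exists. *)

From Stdlib Require Import List.
From mathcomp Require Import all_boot.
Set Implicit Arguments. Unset Strict Implicit. Unset Printing Implicit Defensive.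

Inductive Ens : Type := sup (A : Type) (f : A -> Ens).

Fixpoint EEq (x y : Ens) {struct x} : Prop :=
  match x, y with
  | sup A f, sup B g =>
      (forall a, exists b, EEq (f a) (g b)) /\ (forall b, exists a, EEq (f a) (g b))
  end.

Definition EIn (x y : Ens) : Prop :=
  match y with sup B g => exists b, EEq x (g b) end.

Definition EPair (u v : Ens) : Ens := sup (fun b : bool => if b then u else v).

Definition var := nat.

Inductive literal : Type :=
| LUnion  : var -> var -> var -> literal
| LDiff   : var -> var -> var -> literal
| LOtimes : var -> var -> var -> literal
| LNeq    : var -> var -> literal.

Definition conjunction := seq literal.

Definition lit_vars (l : literal) : seq var :=
  match l with
  | LUnion x y z | LDiff x y z | LOtimes x y z => [:: x; y; z]
  | LNeq x y => [:: x; y]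
  end.

Definition Vars (Phi : conjunction) : seq var := flatten (map lit_vars Phi).

Definition sat_lit (M : var -> Ens) (l : literal) : Prop :=
  match l with
  | LUnion x y z => forall w, EIn w (M x) <-> (EIn w (M y) \/ EIn w (M z))
  | LDiff x y z => forall w, EIn w (M x) <-> (EIn w (M y) /\ ~ EIn w (M z))
  | LOtimes x y z => forall w, EIn w (M x) <->
        exists u v, EIn u (M y) /\ EIn v (M z) /\ EEq w (EPair u v)
  | LNeq x y => ~ EEq (M x) (M y)
  end.

Definition finitely_satisfiable (Phi : conjunction) : Prop :=
  exists M : var -> Ens,
    (forall l, List.In l Phi -> sat_lit M l) /\
    exists (n : nat) (e : 'I_n -> Ens), forall v w, List.In v (Vars Phi) -> EIn w (M v) ->
       exists i, EEq w (e i).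

(* Places: a finite type P.  Nodes {a,b} (a = b allowed) are represented by
   pairs of places; the target map T must be symmetric so that it is a
   function of the unordered node {a,b}. *)
Record otimes_graph := OGraph {
  place :> finType;
  target : place -> place -> {set place};
  target_sym : forall a b, target a b = target b a
}.

Section Graphs.
Variable G : otimes_graph.
Local Notation P := (place G).
Local Notation T := (@target G).

Definition node_in (S1 S2 : {set P}) (a b : P) : Prop :=
  exists u v, u \in S1 /\ v \in S2 /\ ((a = u /\ b = v) \/ (a = v /\ b = u)).

Definition source_place (p : P) : Prop := forall a b, p \notin T a b.

Definition otimes_node (a b : P) : Prop := T a b != set0.

Inductive accessible : P -> Prop :=
| acc_source : forall p, source_place p -> accessible p
| acc_step : forall a b p, accessible a -> accessible b -> p \in T a b -> accessible p.

Definition graph_accessible : Prop := forall p : P, accessible p.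

Definition strict_total_order (lt : P -> P -> Prop) : Prop :=
  (forall x, ~ lt x x) /\
  (forall x y z, lt x y -> lt y z -> lt x z) /\
  (forall x y, x <> y -> lt x y \/ lt y x).

Definition is_max (lt : P -> P -> Prop) (S : P -> Prop) (q : P) : Prop :=
  S q /\ forall r, S r -> r = q \/ lt r q.

Definition topological_order (lt : P -> P -> Prop) : Prop :=
  strict_total_order lt /\
  forall a b, otimes_node a b ->
    exists m q, is_max lt (fun r => r = a \/ r = b) m /\
                is_max lt (fun r => r \in T a b) q /\ lt m q.

Definition has_topological_order : Prop := exists lt, topological_order lt.

Definition fulfilling_lit (F : var -> {set P}) (l : literal) : Prop :=
  match l with
  | LUnion x y z => F x = F y :|: F z
  | LDiff x y z => F x = F y :\: F z
  | LNeq x y => F x <> F y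
  | LOtimes x y z =>
      (forall u v, u \in F y -> v \in F z -> T u v != set0 /\ T u v \subset F x) /\
      (forall p, p \in F x -> exists a b, node_in (F y) (F z) a b /\ p \in T a b) /\
      (forall a b, ~ node_in (F y) (F z) a b -> [disjoint T a b & F x])
  end.

Definition fulfilling (Phi : conjunction) (F : var -> {set P}) : Prop :=
  forall l, List.In l Phi -> fulfilling_lit F l.

Definition fulfills (Phi : conjunction) : Prop := exists F, fulfilling Phi F.

End Graphs.

From Stdlib Require Import Classical ClassicalEpsilon Relations Wellfounded.
From mathcomp Require Import all_boot.
Set Implicit Arguments. Unset Strict Implicit. Unset Printing Implicit Defensive.

(* Let M satisfy Phi and let e : 'I_n -> Ens enumerate (up to
   extensional equality) the finite set  U = \bigcup_v M v.  The canonical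
   graph on the places 'I_n puts place k into the target of the node {a, b}
   exactly when  e k = {e a, e b};  a variable x is then assigned the set of
   places whose set lies in M x.  Each literal of Phi is fulfilled because the
   targets of the graph mirror the pairing operation on U literally.
   Accessibility and the topological order both come from one observation:
   if k is in the target of {a, b} then e a, e b are members of e k, so an
   injective ranking of the places that increases along membership (which
   exists since membership is well founded and there are finitely many places)
   strictly increases from a node to its target. *)

Definition asbool (P : Prop) : bool :=
  if excluded_middle_informative P then true else false.

Lemma asboolP (P : Prop) : reflect P (asbool P).
Proof. by rewrite /asbool; case: excluded_middle_informative => h; constructor. Qed.

Lemma EEq_refl x : EEq x x.
Proof. by elim: x => A f IH /=; split=> a; exists a; apply: IH. Qed.

Lemma EEq_sym x y : EEq x y -> EEq y x.
Proof.
elim: x y => A f IH [B g] /= [fg gf]; split=> b.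
- by have [a h] := gf b; exists a; apply: IH.
- by have [a h] := fg b; exists a; apply: IH.
Qed.

Lemma EEq_trans x y z : EEq x y -> EEq y z -> EEq x z.
Proof.
elim: x y z => A f IH [B g] [C h] /= [fg gf] [gh hg]; split.
- move=> a; have [b hb] := fg a; have [c hc] := gh b.
  by exists c; apply: IH hb hc.
- move=> c; have [b hb] := hg c; have [a ha] := gf b.
  by exists a; apply: IH ha hb.
Qed.

Lemma EIn_eq_l x x' y : EEq x x' -> EIn x y -> EIn x' y.
Proof. by case: y => B g /= h [b hb]; exists b; apply: EEq_trans (EEq_sym h) hb. Qed.

Lemma EIn_eq_r x y y' : EEq y y' -> EIn x y -> EIn x y'.
Proof.
case: y y' => B g [B' g'] /= [gg' _] [b hb].
by have [b' h'] := gg' b; exists b'; apply: EEq_trans hb h'.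
Qed.

Lemma EEq_ext x y : (forall w, EIn w x <-> EIn w y) -> EEq x y.
Proof.
case: x y => A f [B g] /= xy; split.
- by move=> a; have [b hb] := (xy (f a)).1 (ex_intro _ a (EEq_refl _)); exists b.
- move=> b; have [a ha] := (xy (g b)).2 (ex_intro _ b (EEq_refl _)).
  by exists a; apply: EEq_sym.
Qed.

Lemma EIn_pair w u v : EIn w (EPair u v) <-> EEq w u \/ EEq w v.
Proof.
split=> /=; first by case=> [[]] h; [left | right].
by case=> h; [exists true | exists false].
Qed.

Lemma EIn_pair_l u v : EIn u (EPair u v).
Proof. by apply/EIn_pair; left; apply: EEq_refl. Qed.

Lemma EIn_pair_r u v : EIn v (EPair u v).
Proof. by apply/EIn_pair; right; apply: EEq_refl. Qed.

Lemma EEq_pair u v u' v' : EEq u u' -> EEq v v' -> EEq (EPair u v) (EPair u' v').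
Proof. by move=> hu hv /=; split=> -[]; [exists true | exists false | exists true | exists false]. Qed.

Lemma EEq_pair_swap u v : EEq (EPair u v) (EPair v u).
Proof.
by apply: EEq_ext => w; rewrite !EIn_pair; split=> -[h | h]; [right | left | right | left].
Qed.

Lemma EPair_inj a b u v : EEq (EPair a b) (EPair u v) ->
  (EEq a u /\ EEq b v) \/ (EEq a v /\ EEq b u).
Proof.
move=> H.
have /EIn_pair ha := EIn_eq_r H (EIn_pair_l a b).
have /EIn_pair hb := EIn_eq_r H (EIn_pair_r a b).
have /EIn_pair hu := EIn_eq_r (EEq_sym H) (EIn_pair_l u v).
have /EIn_pair hv := EIn_eq_r (EEq_sym H) (EIn_pair_r u v).
case: ha hb hu hv => [au|av] [bu|bv] [ua|ub] [va|vb];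
  first [ left; split; by eauto using EEq_trans, EEq_sym
        | right; split; by eauto using EEq_trans, EEq_sym ].
Qed.

Lemma wf_EIn : well_founded EIn.
Proof.
move=> x; elim: x => A f IH; constructor => y /= [a h].
by constructor => z hz; apply: (Acc_inv (IH a)); apply: EIn_eq_r h hz.
Qed.

(* A well-founded relation on a finite type admits an injective ranking into
   the naturals that strictly increases along the relation: rank an element by
   the number of its predecessors in the transitive closure, and break ties by
   the element's index in the enumeration of the type. *)
Lemma wf_finite_ranking (T : finType) (R : T -> T -> Prop) :
  well_founded R ->
  exists f : T -> nat, injective f /\ forall x y, R x y -> f x < f y.
Proof.
move=> wfR.
pose depth y := #|[set x | asbool (clos_trans T R x y)]|.
have depth_lt x y : R x y -> depth x < depth y.
  move=> Rxy; apply/proper_card/properP; split.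
  - apply/subsetP => z; rewrite !inE => /asboolP zx; apply/asboolP.
    by apply: t_trans zx (t_step _ _ _ _ Rxy).
  - exists x; rewrite !inE; first by apply/asboolP; apply: t_step.
    apply/negP => /asboolP; elim: (wf_clos_trans _ _ wfR x) => z _ IH zz.
    exact: (IH z zz zz).
exists (fun x => depth x * #|T| + enum_rank x); split.
- move=> x y /(congr1 (modn^~ #|T|)).
  rewrite !modnMDl !modn_small ?ltn_ord // => /val_inj; apply: enum_rank_inj.
- move=> x y /depth_lt lt_xy; apply: (@leq_trans ((depth x).+1 * #|T|)).
    by rewrite mulSn addnC ltn_add2r ltn_ord.
  by apply: leq_trans (leq_addr _ _); rewrite leq_mul2r lt_xy orbT.
Qed.

Definition ranking (G : otimes_graph) (f : G -> nat) : Prop :=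
  forall a b p, p \in target a b -> f a < f p /\ f b < f p.

Section RankedGraphs.
Variables (G : otimes_graph) (f : G -> nat).
Hypothesis f_ranking : ranking f.

(* Strong induction on the rank: a place that is not a source lies in the
   target of a node whose places have smaller rank. *)
Lemma ranking_accessible : graph_accessible G.
Proof.
move=> p; suff: forall k (q : G), f q < k -> accessible q by apply; apply: ltnSn.
elim=> // k IH q; rewrite ltnS => qk.
have [src | nsrc] := classic (source_place q); first exact: acc_source.
have [a /not_all_ex_not [b /negP/negbNE qab]] := not_all_ex_not _ _ nsrc.
have [aq bq] := f_ranking qab.
by apply: (acc_step (a := a) (b := b)) => //; apply: IH; apply: leq_trans qk.
Qed.

Hypothesis f_inj : injective f.

Local Notation rank_lt := (fun x y : G => f x < f y).

Lemma rank_is_max (S : G -> Prop) q :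
  S q -> (forall r, S r -> f r <= f q) -> is_max rank_lt S q.
Proof.
move=> Sq qmax; split=> // r /qmax; rewrite leq_eqVlt.
by case/orP => [/eqP/f_inj -> | lt_rq]; [left | right].
Qed.

Lemma ranking_topological : has_topological_order G.
Proof.
exists rank_lt; split.
  split; first by move=> x; rewrite ltnn.
  split; first by move=> x y z; apply: ltn_trans.
  move=> x y neq_xy; case: (ltngtP (f x) (f y)) => [|| /f_inj] //; by [left | right].
move=> a b /set0Pn [q0 q0ab].
have [q qab qmax] := arg_maxnP f q0ab.
have [aq bq] := f_ranking qab.
exists (if f a < f b then b else a), q; split; [|split].
- apply: rank_is_max; first by case: ifP; [right | left].
  by case: ltnP => ab r [->|->]; rewrite ?leqnn // ltnW.
- exact: rank_is_max.
- by case: ifP.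
Qed.

End RankedGraphs.

Section PairGraph.
Variables (n : nat) (e : 'I_n -> Ens).

Definition pair_target (a b : 'I_n) : {set 'I_n} :=
  [set k | asbool (EEq (e k) (EPair (e a) (e b)))].

Lemma pair_targetP a b k :
  reflect (EEq (e k) (EPair (e a) (e b))) (k \in pair_target a b).
Proof. by rewrite inE; apply: asboolP. Qed.

Lemma pair_target_sym a b : pair_target a b = pair_target b a.
Proof.
apply/setP => k; apply/pair_targetP/pair_targetP => h;
  by apply: EEq_trans h (EEq_pair_swap _ _).
Qed.

Definition pair_graph : otimes_graph := OGraph pair_target_sym.

(* The components of a pair are members of it, so a ranking along membership
   of the enumerated sets is a ranking of the pair graph. *)
Lemma pair_graph_ranking :
  exists f : pair_graph -> nat, injective f /\ ranking f.
Proof.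
have wf_e : well_founded (fun p q : 'I_n => EIn (e p) (e q)).
  exact: wf_inverse_image wf_EIn.
have [f [f_inj f_mono]] := wf_finite_ranking wf_e.
exists f; split=> // a b p /pair_targetP pab.
by split; apply: f_mono; apply: EIn_eq_r (EEq_sym pab) _;
  [apply: EIn_pair_l | apply: EIn_pair_r].
Qed.

Definition covered (X : Ens) : Prop := forall w, EIn w X -> exists i, EEq w (e i).

Definition index_set (X : Ens) : {set 'I_n} := [set i | asbool (EIn (e i) X)].

Lemma index_setP X i : reflect (EIn (e i) X) (i \in index_set X).
Proof. by rewrite inE; apply: asboolP. Qed.

Lemma index_set_inj X Y : covered X -> covered Y ->
  index_set X = index_set Y -> EEq X Y.
Proof.
move=> covX covY XY; apply: EEq_ext => w; split=> win.
- have [i wi] := covX w win; apply: EIn_eq_l (EEq_sym wi) _.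
  by apply/index_setP; rewrite -XY; apply/index_setP; apply: EIn_eq_l wi win.
- have [i wi] := covY w win; apply: EIn_eq_l (EEq_sym wi) _.
  by apply/index_setP; rewrite XY; apply/index_setP; apply: EIn_eq_l wi win.
Qed.

Section Otimes.
Variables X Y Z : Ens.
Hypothesis XYZ : forall w, EIn w X <->
  exists u v, EIn u Y /\ EIn v Z /\ EEq w (EPair u v).
Local Notation F := index_set.

Lemma pair_otimes_targets (u v : pair_graph) : covered X ->
  u \in F Y -> v \in F Z -> pair_target u v != set0 /\ pair_target u v \subset F X.
Proof.
move=> covX /index_setP uY /index_setP vZ.
have uvX : EIn (EPair (e u) (e v)) X.
  by apply/XYZ; exists (e u), (e v); split; [|split; [|apply: EEq_refl]].
split.
- have [k uvk] := covX _ uvX.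
  by apply/set0Pn; exists k; apply/pair_targetP; apply: EEq_sym.
- apply/subsetP => k /pair_targetP kuv; apply/index_setP.
  exact: EIn_eq_l (EEq_sym kuv) uvX.
Qed.

Lemma pair_otimes_covered p : covered Y -> covered Z -> p \in F X ->
  exists a b : pair_graph, node_in (G := pair_graph) (F Y) (F Z) a b /\ p \in pair_target a b.
Proof.
move=> covY covZ /index_setP /XYZ [u [v [uY [vZ puv]]]].
have [a ua] := covY u uY; have [b vb] := covZ v vZ.
exists a, b; split; last by apply/pair_targetP; apply: EEq_trans puv (EEq_pair ua vb).
exists a, b; split; first by apply/index_setP; apply: EIn_eq_l ua uY.
by split; [apply/index_setP; apply: EIn_eq_l vb vZ | left].
Qed.

Lemma pair_otimes_disjoint (a b : pair_graph) :
  ~ node_in (G := pair_graph) (F Y) (F Z) a b -> [disjoint pair_target a b & F X].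
Proof.
move=> not_node; rewrite disjoint_subset; apply/subsetP => p /pair_targetP pab.
rewrite inE; apply/negP => /index_setP /XYZ [u [v [uY [vZ puv]]]].
apply: not_node.
case: (EPair_inj (EEq_trans (EEq_sym pab) puv)) => -[ha hb];
  [exists a, b | exists b, a]; (split; [|split]); try by [left | right];
  apply/index_setP; apply: EIn_eq_l (EEq_sym _) _; eassumption.
Qed.

End Otimes.

Lemma pair_fulfilling_lit (M : var -> Ens) l :
  (forall x, List.In x (lit_vars l) -> covered (M x)) ->
  sat_lit M l -> fulfilling_lit (G := pair_graph) (fun x => index_set (M x)) l.
Proof.
case: l => [x y z | x y z | x y z | x y] /= cov sat.
- apply/setP => i; apply/index_setP/setUP.
  + by move=> /sat [h | h]; [left | right]; apply/index_setP.
  + by move=> h; apply/sat; case: h => /index_setP h; [left | right].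
- apply/setP => i; apply/index_setP/setDP.
  + by move=> /sat [hy hz]; split; apply/index_setP.
  + by move=> [/index_setP hy /index_setP hz]; apply/sat.
- split; [|split].
  + by move=> u v; apply: pair_otimes_targets; [|apply: cov; left].
  + by move=> p; apply: pair_otimes_covered; [|apply: cov; right; left
                                               |apply: cov; right; right; left].
  + by move=> a b; apply: pair_otimes_disjoint.
- move=> eq_xy; apply: sat; apply: (index_set_inj _ _ eq_xy).
  + by apply: cov; left.
  + by apply: cov; right; left.
Qed.

End PairGraph.

Lemma In_Vars Phi l x :
  List.In l Phi -> List.In x (lit_vars l) -> List.In x (Vars Phi).
Proof.
move=> lPhi xl; elim: Phi lPhi => //= l' Phi IH lPhi.
by apply/List.in_or_app; case: lPhi => [-> | /IH]; [left | right].
Qed.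

Theorem lemma14 (Phi : conjunction) :
  finitely_satisfiable Phi ->
  exists G : otimes_graph,
    fulfills G Phi /\ graph_accessible G /\ has_topological_order G.
Proof.
move=> [M [sat_M [n [e cov_e]]]].
have [f [f_inj f_rank]] := pair_graph_ranking e.
exists (pair_graph e); split; [|split].
- exists (fun x => index_set e (M x)) => l lPhi.
  apply: pair_fulfilling_lit (sat_M l lPhi) => x xl w wx.
  exact: cov_e (In_Vars lPhi xl) wx.
- exact: ranking_accessible f_rank.
- exact: ranking_topological f_rank f_inj.
Qed.
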